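(* Let $u$ and $v$ be vertices of $G$ and let $\delta_T(u,v)$ denote the length of the path from $u$ to $v$ in $T$. The routing algorithm, when routing from $u$ to $v$, terminates after a finite number of steps, and the total weight (in $G$) of the path it traverses is exactly $\delta_T(u,v)$; in particular the routing ratio with respect to the tree metric induced by $T$ is $1$.
   Context: Let $T$ be a rooted tree on $n$ vertices with positive edge weights; $P(a,b)$ is the path in $T$ from $a$ to $b$ and $\delta_T(a,b)$ its weight. Ancestor/descendant refer to $T$, and a vertex counts as its own ancestor and descendant; ''deepest''/''highest'' refer to depth in $T$. $T_v$ is the subtree of $T$ rooted at $v$. For every non-leaf vertex $v$ fix a child $c_1(v)$ with $|T_{c_1(v)}|$ maximal; edges $(v,c_1(v))$ are leftmost. A subtree $R$ of $T$ is rooted at its vertex closest to the root, $rt(R)$, and inherits the leftmost labelling; $R_v$ is the subtree of $R$ rooted at $v$. $P_R(v)$ is the longest downward path from $v$ in $R$ using only leftmost edges, with last vertex $l(v)$; $l(R):=l(rt(R))$. A vertex $v$ of $R$ is $d$-balanced if $|R_{c_1(v)}|\le |R|-d$ (with $|R_{c_1(v)}|=0$ if $c_1(v)$ is undefined or not in $R$); $b_d(v)$ is the first $d$-balanced vertex on $P_R(v)$, or NULL. $CV(R,d)=\emptyset$ if $b_d(rt(R))$ is NULL, else $\{b\}\cup\bigcup_w CV(R_w,d)$ with $b=b_d(rt(R))$ and $w$ ranging over children of $b$ in $R$. Fix an integer $k\ge4$; for a subtree $R$ with $m$ vertices, $C_R=V(R)$ if $k\ge m/2-1$, else $C_R=CV(R,m/k)\cup\{l(R),rt(R)\}$.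 Canonical subtrees: $T$ is canonical; if $R$ is canonical, each component of $R$ minus $C_R$ is canonical. Each vertex $v$ lies in $C_R$ for exactly one canonical $R$, denoted $T^v$. The spanner $G$ has vertex set $V(T)$ and edges: all edges of $T$, and all pairs of distinct vertices of $C_R$ for every canonical $R$; edge $(a,b)$ has weight $\delta_T(a,b)$. Routing algorithm from current vertex $u$ to destination $v$, repeated until $v$ is reached: Case 0: if $v$ is adjacent to $u$, move to $v$. Case 1: $u$ is an ancestor of $v$; let $X$ be the vertices of $C_{T^u}$ that are ancestors of $v$, $x$ the deepest; move to $x$, then to the child of $x$ that is an ancestor of $v$. Case 2: $u$ is a descendant of $v$; let $X$ be the vertices of $C_{T^u}$ that are descendants of $v$ and ancestors of $u$, $x$ the highest; move to $x$, then to the parent of $x$. Case 3: $u$ is neither; let $X$ be the vertices of $C_{T^u}$ that are ancestors of $v$ but not of $u$, and $Y$ those that are ancestors of $u$ but not of $v$, $y$ the highest vertex of $Y$. Case 3 a): $X=\emptyset$: move to $y$, then to the parent of $y$. Case 3 b): $X\neq\emptyset$: with $x$ the deepest vertex of $X$ and $x'$ the child of $x$ that is an ancestor of $v$, move to $x$, then to $x'$. (Moving to the current vertex means staying.) *)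

From mathcomp Require Import all_boot all_order all_algebra.
Set Implicit Arguments.
Unset Strict Implicit.
Unset Printing Implicit Defensive.
Import Order.TTheory GRing.Theory Num.Theory.

(* A rooted tree on the finite vertex type V (n = #|V|) is given by its root
   r and a parent map par, with par r = r and every vertex reaching r by
   iterating par.  The edges of T are the pairs (x, par x), x != r; the
   weight of edge (x, par x) is w x. *)

Section Tree.
Variables (V : finType) (r : V) (par : V -> V).

Definition is_rooted_tree : Prop :=
  par r = r /\ forall x : V, exists i, iter i par x = r.

(* x is an ancestor of y (reflexive).  In a tree every ancestor is reached
   in fewer than #|V| parent steps. *)
Definition anc (x y : V) : bool := [exists i : 'I_#|V|, iter i par y == x].

Definition child (c v : V) : bool := (c != r) && (par c == v).

Definition adjT (x y : V) : bool := child x y || child y x.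

Definition dep (x : V) : nat := #|[set y | anc y x]|.

Definition tsize (v : V) : nat := #|[set y | anc v y]|.

Definition heavy_child_spec (c1 : V -> option V) : Prop :=
  forall v, match c1 v with
            | Some c => child c v /\ forall c', child c' v -> tsize c' <= tsize c
            | None => forall c, ~~ child c v
            end.

(* tree distance delta_T(a,b): the edges (x, par x) of P(a,b) are exactly
   those with x an ancestor of exactly one of a, b. *)
Definition dT (R : numDomainType) (w : V -> R) (a b : V) : R :=
  \sum_(x | anc x a (+) anc x b) w x.

Section Sub.
Variables (c1 : V -> option V) (k : nat).

Definition Rsub (R : {set V}) (v : V) : {set V} := [set x in R | anc v x].

Definition rtS (R : {set V}) : V := odflt r [pick x in R | [forall y in R, anc x y]].

(* one step along a leftmost edge inside R (stays at the end of P_R) *)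
Definition lstep (R : {set V}) (x : V) : V :=
  if c1 x is Some c then (if c \in R then c else x) else x.

(* l(v) : last vertex of P_R(v) *)
Definition lR (R : {set V}) (v : V) : V := iter #|V| (lstep R) v.

Definition c1size (R : {set V}) (v : V) : nat :=
  if c1 v is Some c then (if c \in R then #|Rsub R c| else 0) else 0.

(* v is d-balanced in R, where d = m / k:  |R_{c1 v}| <= |R| - m/k *)
Definition balanced (m : nat) (R : {set V}) (v : V) : bool :=
  k * c1size R v + m <= k * #|R|.

Definition bd (m : nat) (R : {set V}) (v : V) : option V :=
  let s := [seq iter i (lstep R) v | i <- iota 0 #|V|.+1] in
  let i := find (balanced m R) s in
  if i < size s then Some (nth v s i) else None.

(* CV(R, m/k), computed with fuel (#|V| levels suffice) *)
Fixpoint CVf (fuel m : nat) (R : {set V}) : {set V} :=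
  match fuel with
  | 0 => set0
  | f.+1 =>
      match bd m R (rtS R) with
      | None => set0
      | Some b => b |: \bigcup_(w in R | child w b) CVf f m (Rsub R w)
      end
  end.

Definition CV (m : nat) (R : {set V}) : {set V} := CVf #|V| m R.

(* C_R ; k >= m/2 - 1  <->  m <= 2k + 2 *)
Definition CR (R : {set V}) : {set V} :=
  let m := #|R| in
  if m <= 2 * k + 2 then R else CV m R :|: [set lR R (rtS R); rtS R].

Definition subtreeb (S : {set V}) : bool :=
  [exists t in S, [forall x in S, anc t x && ((x == t) || (par x \in S))]].

Definition component (A S : {set V}) : bool :=
  [&& S != set0, S \subset A, subtreeb S &
      [forall x in S, forall y in A, adjT x y ==> (y \in S)]].

(* canonical subtrees, level by level (#|V| levels suffice) *)
Fixpoint canl (f : nat) : {set {set V}} :=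
  match f with
  | 0 => [set setT]
  | f'.+1 => canl f' :|: \bigcup_(R in canl f') [set S | component (R :\: CR R) S]
  end.

Definition canonicals : {set {set V}} := canl #|V|.

Definition Tu (u : V) : {set V} := odflt setT [pick R in canonicals | u \in CR R].

Definition adjG (a b : V) : bool :=
  (a != b) && (adjT a b || [exists R in canonicals, (a \in CR R) && (b \in CR R)]).

Definition deepest (X : {set V}) (d : V) : V :=
  odflt d [pick x in X | [forall y in X, dep y <= dep x]].
Definition highest (X : {set V}) (d : V) : V :=
  odflt d [pick x in X | [forall y in X, dep x <= dep y]].
Definition childTo (x v : V) : V := odflt x [pick c | child c x && anc c v].

Definition rstep (u v : V) : seq V :=
  let C := CR (Tu u) in
  if adjG u v then [:: v]
  else if anc u v then
    let x := deepest [set x in C | anc x v] u in [:: x; childTo x v]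
  else if anc v u then
    let x := highest [set x in C | anc v x && anc x u] u in [:: x; par x]
  else
    let X := [set x in C | anc x v && ~~ anc x u] in
    let Y := [set y in C | anc y u && ~~ anc y v] in
    if X == set0 then let y := highest Y u in [:: y; par y]
    else let x := deepest X u in [:: x; childTo x v].

Fixpoint route (f : nat) (u v : V) : seq V :=
  match f with
  | 0 => [::]
  | f'.+1 => if u == v then [::]
             else let s := rstep u v in s ++ route f' (last u s) v
  end.

End Sub.

(* weight of a walk x, s_1, s_2, ... (each move (a,b) has weight delta_T(a,b)) *)
Fixpoint walkw (R : numDomainType) (w : V -> R) (x : V) (s : seq V) : R :=
  match s with
  | [::] => 0
  | y :: s' => dT w x y + walkw w y s'
  end.

End Tree.

From mathcomp Require Import all_boot all_order all_algebra.
From mathcomp Require Import zify.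
Import Order.TTheory GRing.Theory Num.Theory.
Set Implicit Arguments. Unset Strict Implicit. Unset Printing Implicit Defensive.

(* Every iteration of the routing algorithm makes at most two moves, each
   either along a tree edge or inside C_{T^u}, which is a clique of G
   containing the current vertex u; and every move lands on the tree path
   from the vertex it leaves to the destination v.  Hence the weights
   delta_T of the moves telescope to delta_T(u, v), and the number of tree
   edges left to v drops at every iteration, so the route reaches v.
   The only property of the sets C_R that matters is that every vertex u
   lies in some C_R with R canonical: while u avoids C_R, the component of
   R minus C_R containing u is canonical and strictly smaller than R, since
   it misses rt(R), which belongs to C_R. *)

Section RootedTree.
Variables (V : finType) (r : V) (par : V -> V).
Hypothesis tree : is_rooted_tree r par.

Local Notation anc := (anc par).
Implicit Types A : {set V}.

Lemma ancP x y : reflect (exists n, iter n par y = x) (anc x y).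
Proof.
apply: (iffP existsP) => [[i /eqP <-]|[n yx]]; first by exists i.
have y_to_x : fconnect par y x by rewrite -yx fconnect_iter.
have lt_idx : findex par y x < #|V| := leq_trans (findex_max y_to_x) (max_card _).
by exists (Ordinal lt_idx); rewrite /= iter_findex.
Qed.

Lemma anc_refl x : anc x x.
Proof. by apply/ancP; exists 0. Qed.

Lemma anc_par x : anc (par x) x.
Proof. by apply/ancP; exists 1. Qed.

Lemma anc_trans x y z : anc x y -> anc y z -> anc x z.
Proof. by move=> /ancP[i <-] /ancP[j <-]; apply/ancP; exists (i + j); rewrite iterD. Qed.

Lemma iter_par_root n : iter n par r = r.
Proof. by elim: n => //= n ->; case: tree. Qed.

Lemma anc_root x : anc r x.
Proof. by case: tree => _ /(_ x) [n xr]; apply/ancP; exists n. Qed.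

Lemma anc_eq_or_par z y : anc z y -> z = y \/ anc z (par y).
Proof.
move=> /ancP[[|n]]; first by left.
by rewrite iterSr => zy; right; apply/ancP; exists n.
Qed.

Lemma anc_total a b v : anc a v -> anc b v -> anc a b || anc b a.
Proof.
move=> /ancP[i <-] /ancP[j <-]; case: (leqP i j) => [le_ij|/ltnW le_ji].
  by apply/orP; right; apply/ancP; exists (j - i); rewrite -iterD subnK.
by apply/orP; left; apply/ancP; exists (i - j); rewrite -iterD subnK.
Qed.

Lemma iter_par_periodic x p : 0 < p -> iter p par x = x -> x = r.
Proof.
move=> p_gt0 px; case: tree => _ /(_ x) [m xr].
have mpx : iter (m * p) par x = x by elim: m {xr} => //= m IH; rewrite mulSn iterD IH px.
have le_m_mp : m <= m * p by rewrite leq_pmulr.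
by rewrite -mpx -(subnK le_m_mp) iterD xr iter_par_root.
Qed.

Lemma anc_antisym x y : anc x y -> anc y x -> x = y.
Proof.
move=> /ancP[[|i] yx] /ancP[j xy]; first by [].
have y_root : y = r.
  by apply: (@iter_par_periodic y (j + i.+1)); [rewrite addnS | rewrite iterD yx].
by rewrite -yx y_root iter_par_root.
Qed.

Lemma par_neq x : x != r -> par x != x.
Proof. by apply: contraNN => /eqP px; apply/eqP/(@iter_par_periodic x 1). Qed.

Lemma dep_lt x y : anc x y -> x != y -> dep par x < dep par y.
Proof.
move=> xy neq_xy; apply: proper_card; apply/properP; split.
  by apply/subsetP => z; rewrite !inE => /anc_trans; apply.
exists y; rewrite !inE ?anc_refl //.
by apply: contra neq_xy => yx; rewrite (anc_antisym xy yx).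
Qed.

Lemma anc_child x v : anc x v -> x != v -> exists c, child r par c x && anc c v.
Proof.
move=> /ancP[n]; elim: n v => [|n IH] v /=; first by move=> ->; rewrite eqxx.
move=> xv neq_xv; case: (eqVneq (iter n par v) r) => [nv_root|nv_nonroot].
  by apply: IH => //; rewrite -xv nv_root; case: tree.
exists (iter n par v); rewrite /child nv_nonroot xv eqxx /=.
by apply/ancP; exists n.
Qed.

(* [between a b c]: b lies on the tree path P(a, c).  An edge (x, par x) lies
   on P(a, b) iff x is an ancestor of exactly one of a and b, so this says
   that every edge off P(a, c) is also off P(a, b). *)
Definition between (a b c : V) : bool :=
  [forall x, (anc x a == anc x c) ==> (anc x b == anc x a)].

Lemma betweenP a b c x : between a b c -> anc x a = anc x c -> anc x b = anc x a.
Proof. by move=> /forallP/(_ x) + xac; rewrite xac eqxx => /eqP. Qed.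

Lemma dT_between (R : numDomainType) (w : V -> R) a b c :
  between a b c -> (dT par w a b + dT par w b c = dT par w a c)%R.
Proof.
move=> abc; rewrite /dT !(big_mkcond (fun x => _ (+) _)) -big_split /=.
apply: eq_bigr => x _; move: (betweenP (x := x) abc).
by case: (anc x a) (anc x b) (anc x c) => [] [] [] /=; rewrite ?addr0 ?add0r // => /(_ erefl).
Qed.

Lemma dT_xx (R : numDomainType) (w : V -> R) a : dT par w a a = 0%R.
Proof. by rewrite /dT big_pred0 // => x; rewrite addbb. Qed.

Lemma between_last a c : between a c c.
Proof. by apply/forallP => x; apply/implyP; rewrite eq_sym. Qed.

Lemma between_down a b c : anc a b -> anc b c -> between a b c.
Proof.
move=> ab bc; apply/forallP => x; apply/implyP => /eqP.
case xa: (anc x a) => xc; first by rewrite (anc_trans xa ab).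
by apply/eqP/negbTE/negP => xb; rewrite (anc_trans xb bc) in xc.
Qed.

Lemma between_up a b c : anc c b -> anc b a -> between a b c.
Proof.
move=> cb ba; apply/forallP => x; apply/implyP => /eqP.
case xa: (anc x a) => xc; first by rewrite (anc_trans (esym xc) cb).
by apply/eqP/negbTE/negP => xb; rewrite (anc_trans xb ba) in xa.
Qed.

Lemma between_ancL a b c : anc b a -> ~~ anc b c -> between a b c.
Proof.
move=> ba bc; apply/forallP => x; apply/implyP => /eqP.
case xa: (anc x a) => xc; last by apply/eqP/negbTE/negP => xb; rewrite (anc_trans xb ba) in xa.
have /orP[-> // | bx] := anc_total xa ba.
by rewrite (anc_trans bx (esym xc)) in bc.
Qed.

Lemma between_ancR a b c : anc b c -> ~~ anc b a -> between a b c.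
Proof.
move=> bc ba; apply/forallP => x; apply/implyP => /eqP.
case xa: (anc x a) => xc; last by apply/eqP/negbTE/negP => xb; rewrite (anc_trans xb bc) in xc.
have /orP[-> // | bx] := anc_total (esym xc) bc.
by rewrite (anc_trans bx xa) in ba.
Qed.

Lemma between_par b c : ~~ anc b c -> between b (par b) c.
Proof.
move=> bc; apply/forallP => x; apply/implyP => /eqP.
case xb: (anc x b) => xc; last first.
  by apply/eqP/negbTE/negP => xpb; rewrite (anc_trans xpb (anc_par b)) in xb.
by case: (anc_eq_or_par xb) => [x_b | ->]; first by rewrite -x_b -xc in bc.
Qed.

Lemma walkw_between (R : numDomainType) (w : V -> R) c a s :
  path (fun x y => between x y c) a s ->
  (walkw par w a s + dT par w (last a s) c = dT par w a c)%R.
Proof.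
elim: s a => [|b s IH] a /=; first by rewrite add0r.
by case/andP => abc bs; rewrite -addrA IH // dT_between.
Qed.

Definition hops (a b : V) : nat := #|[set x | anc x a (+) anc x b]|.

Lemma hops_between a b c : between a b c -> hops a b + hops b c = hops a c.
Proof.
move=> abc; rewrite /hops -cardsUI.
have -> : [set x | anc x a (+) anc x b] :&: [set x | anc x b (+) anc x c] = set0.
  apply/setP => x; rewrite !inE; move: (betweenP (x := x) abc).
  by case: (anc x a); case: (anc x b); case: (anc x c) => //= ->.
rewrite cards0 addn0; apply: eq_card => x; rewrite !inE; move: (betweenP (x := x) abc).
by case: (anc x a); case: (anc x b); case: (anc x c) => //= ->.
Qed.

Lemma hops_xx a : hops a a = 0.
Proof. by apply/eqP; rewrite cards_eq0; apply/eqP/setP => x; rewrite !inE addbb. Qed.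

Lemma hops_gt0 a b : a != b -> 0 < hops a b.
Proof.
move=> neq_ab; apply/card_gt0P.
case ab: (anc a b); last by exists a; rewrite inE anc_refl ab.
exists b; rewrite inE anc_refl addbT; apply: contra neq_ab => ba.
by rewrite (anc_antisym ab ba).
Qed.

Definition vpath_in A (t x : V) : bool :=
  [forall z, anc t z && anc z x ==> (z \in A)].

Lemma vpath_in_refl A x : x \in A -> vpath_in A x x.
Proof.
move=> xA; apply/forallP => z; apply/implyP => /andP[xz zx].
by rewrite -(anc_antisym xz zx).
Qed.

Lemma vpath_in_mem A t x : anc t x -> vpath_in A t x -> x \in A.
Proof. by move=> tx /forallP/(_ x)/implyP; apply; rewrite tx anc_refl. Qed.

Lemma vpath_in_prefix A t x y : anc y x -> vpath_in A t x -> vpath_in A t y.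
Proof.
move=> yx /forallP tx; apply/forallP => z; apply/implyP => /andP[tz zy].
by apply: (implyP (tx z)); rewrite tz (anc_trans zy yx).
Qed.

Lemma vpath_in_child A t y : y \in A -> vpath_in A t (par y) -> vpath_in A t y.
Proof.
move=> yA /forallP ty; apply/forallP => z; apply/implyP => /andP[tz zy].
case: (anc_eq_or_par zy) => [-> // | zpy].
by apply: (implyP (ty z)); rewrite tz zpy.
Qed.

Section Component.
Variables (A : {set V}) (u : V).
Hypothesis uA : u \in A.

Definition comp_root : V :=
  [arg min_(t < u | anc t u && vpath_in A t u) dep par t].

Definition comp_of : {set V} := [set x | anc comp_root x && vpath_in A comp_root x].

Lemma comp_rootP :
  [/\ anc comp_root u, vpath_in A comp_root u &
      forall t, anc t u -> vpath_in A t u -> dep par comp_root <= dep par t].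
Proof.
rewrite /comp_root; case: arg_minnP => [|t /andP[tu tA] t_min].
  by rewrite anc_refl vpath_in_refl.
by split=> // s su sA; apply: t_min; rewrite su sA.
Qed.

Lemma mem_comp_of : u \in comp_of.
Proof. by have [ru rA _] := comp_rootP; rewrite inE ru rA. Qed.

Lemma comp_root_inA : comp_root \in A.
Proof.
have [ru rA _] := comp_rootP.
exact: vpath_in_mem (anc_refl _) (vpath_in_prefix ru rA).
Qed.

Lemma comp_root_in_comp : comp_root \in comp_of.
Proof. by rewrite inE anc_refl vpath_in_refl // comp_root_inA. Qed.

Lemma comp_of_par x : x \in comp_of -> x != comp_root -> par x \in comp_of.
Proof.
rewrite !inE => /andP[rx rA] neq_xr.
case: (anc_eq_or_par rx) => [x_r | rpx]; first by rewrite x_r eqxx in neq_xr.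
by rewrite rpx (vpath_in_prefix (anc_par x) rA).
Qed.

(* Otherwise [par comp_root] would be a higher candidate root. *)
Lemma comp_root_par_notin : comp_root != r -> par comp_root \notin A.
Proof.
move=> r_nonroot; have [ru rA r_min] := comp_rootP; apply/negP => prA.
have prA_u : vpath_in A (par comp_root) u.
  apply/forallP => z; apply/implyP => /andP[prz zu].
  have /orP[rz | zr] := anc_total ru zu.
    by apply: (implyP (forallP rA z)); rewrite rz zu.
  case: (anc_eq_or_par zr) => [-> | zpr]; first exact: comp_root_inA.
  by rewrite (anc_antisym zpr prz).
have := r_min _ (anc_trans (anc_par _) ru) prA_u.
by rewrite leqNgt (dep_lt (anc_par _)) // par_neq.
Qed.

Lemma component_comp_of : component r par A comp_of.
Proof.
apply/and4P; split.
- by apply/set0Pn; exists u; apply: mem_comp_of.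
- by apply/subsetP => x; rewrite inE => /andP[]; apply: vpath_in_mem.
- apply/existsP; exists comp_root; rewrite comp_root_in_comp /=.
  apply/forallP => x; apply/implyP => xS; move: (xS); rewrite inE => /andP[-> _] /=.
  by case: eqVneq => //= neq_xr; rewrite comp_of_par.
apply/forallP => x; apply/implyP => xS; apply/forallP => y; apply/implyP => yA.
apply/implyP => /orP[/andP[x_nonroot /eqP pxy] | /andP[_ /eqP pyx]].
  rewrite -pxy; case: (eqVneq x comp_root) => [x_r | neq_xr]; last exact: comp_of_par.
  rewrite -pxy x_r in yA; rewrite x_r in x_nonroot.
  by rewrite (negPf (comp_root_par_notin x_nonroot)) in yA.
move: xS; rewrite !inE -pyx => /andP[rpy rA].
by rewrite (anc_trans rpy (anc_par y)) vpath_in_child.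
Qed.

End Component.

Lemma component_exists A u : u \in A -> exists S, component r par A S && (u \in S).
Proof.
by move=> uA; exists (comp_of A u); rewrite component_comp_of // mem_comp_of.
Qed.

Lemma deepest_spec (X : {set V}) d : X != set0 ->
  deepest par X d \in X /\ forall y, y \in X -> dep par y <= dep par (deepest par X d).
Proof.
move=> /set0Pn[x0 x0X]; rewrite /deepest; case: pickP => [x /andP[xX /forallP x_max] | none].
  by split=> // y yX; apply: (implyP (x_max y)).
case: (@arg_maxnP _ x0 (fun y => y \in X) (dep par) x0X) => x xX x_max.
move: (none x) => /=; rewrite xX /=; move/negbT/negP; case.
by apply/forallP => y; apply/implyP/x_max.
Qed.

Lemma highest_in (X : {set V}) d : d \in X -> highest par X d \in X.
Proof. by rewrite /highest; case: pickP => [x /andP[] | ]. Qed.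

Lemma childTo_spec x v : anc x v -> x != v ->
  child r par (childTo r par x v) x && anc (childTo r par x v) v.
Proof.
move=> xv neq_xv; rewrite /childTo; case: pickP => [c // | none] /=.
by have [c cx] := anc_child xv neq_xv; rewrite none in cx.
Qed.

Section Canonical.
Variables (c1 : V -> option V) (k : nat).

Local Notation CR := (CR r par c1 k).

Lemma subtree_rtS R : subtreeb par R -> rtS r par R \in R.
Proof.
move=> /existsP[t /andP[tR /forallP t_top]]; rewrite /rtS.
case: pickP => [x /andP[] // | no_top]; move: (no_top t); rewrite tR /=.
move/negbT/negP; case; apply/forallP => y; apply/implyP => yR.
by case/andP: (implyP (t_top y) yR).
Qed.

Lemma rtS_in_CR R x : x \in R :\: CR R -> rtS r par R \in CR R.
Proof.
rewrite /CR; case: ifP => [_ | _ _]; first by rewrite setDv inE.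
by rewrite !inE eqxx !orbT.
Qed.

Lemma canl_cover f u :
  (exists2 R, R \in canl r par c1 k f & u \in CR R) \/
  (exists R, [/\ R \in canl r par c1 k f, subtreeb par R, u \in R & #|R| + f <= #|V|]).
Proof.
elim: f => [|f [[R Rf uC] | [R [Rf R_sub uR R_small]]]].
- right; exists setT; rewrite /= inE eqxx in_setT cardsT addn0; split => //.
  apply/existsP; exists r; rewrite in_setT /=; apply/forallP => x.
  by rewrite !in_setT anc_root orbT.
- by left; exists R; rewrite //= inE Rf.
case uC: (u \in CR R); first by left; exists R; rewrite //= inE Rf.
have uA : u \in R :\: CR R by rewrite inE uC uR.
have [S /andP[RS uS]] := component_exists uA.
have /and4P[_ S_sub S_subtree _] := RS.
have lt_SR : #|S| < #|R|.
  apply/proper_card/properP; split.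
    by apply: subset_trans S_sub _; apply: subsetDl.
  exists (rtS r par R); first exact: subtree_rtS.
  by apply: contraL (rtS_in_CR uA) => /(subsetP S_sub); rewrite inE => /andP[].
right; exists S; split => //; last by lia.
by rewrite /= inE; apply/orP; right; apply/bigcupP; exists R => //; rewrite inE.
Qed.

Lemma Tu_spec u : Tu r par c1 k u \in canonicals r par c1 k /\ u \in CR (Tu r par c1 k u).
Proof.
have [R RC uC] : exists2 R, R \in canonicals r par c1 k & u \in CR R.
  case: (canl_cover #|V| u) => [// | [R [_ _ uR]]].
  by rewrite -[X in _ <= X]add0n leq_add2r leqn0 cards_eq0 => /eqP R0; rewrite R0 inE in uR.
rewrite /Tu; case: pickP => [S /andP[-> ->] // | no_R].
by move: (no_R R); rewrite RC uC.
Qed.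

Local Notation adjG := (adjG r par c1 k).

Lemma adjG_CR_Tu u a b :
  a != b -> a \in CR (Tu r par c1 k u) -> b \in CR (Tu r par c1 k u) -> adjG a b.
Proof.
move=> neq_ab aC bC; rewrite /adjG neq_ab; apply/orP; right.
by apply/existsP; exists (Tu r par c1 k u); rewrite aC bC (proj1 (Tu_spec u)).
Qed.

Lemma adjG_child x c : child r par c x -> adjG x c.
Proof.
move=> /[dup] /andP[c_nonroot /eqP <-] cx.
by rewrite /adjG par_neq // /adjT cx orbT.
Qed.

Lemma adjG_par x : x != r -> adjG x (par x).
Proof.
move=> x_nonroot; rewrite /adjG eq_sym par_neq //= /adjT /child.
by rewrite x_nonroot eqxx.
Qed.

Definition route_edge (v a b : V) : bool := between a b v && ((a == b) || adjG a b).

Definition advances (v u : V) (s : seq V) : bool :=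
  path (route_edge v) u s && (hops (last u s) v < hops u v).

Lemma advances_two_moves u x y v :
  between u x v -> between x y v -> x != y -> (u == x) || adjG u x -> adjG x y ->
  advances v u [:: x; y].
Proof.
move=> uxv xyv neq_xy ux xy; rewrite /advances /= /route_edge uxv xyv ux xy orbT /=.
have := hops_between uxv; have := hops_between xyv; have := hops_gt0 neq_xy; lia.
Qed.

Lemma advances_childTo u x v : between u x v -> (u == x) || adjG u x ->
  anc x v -> x != v -> advances v u [:: x; childTo r par x v].
Proof.
move=> uxv ux xv neq_xv.
have /andP[/[dup] cx /andP[c_nonroot /eqP pc] cv] := childTo_spec xv neq_xv.
apply: advances_two_moves uxv _ _ ux (adjG_child cx).
  by apply: between_down cv; rewrite -{1}pc anc_par.
by rewrite -{1}pc par_neq.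
Qed.

Lemma advances_par u y v : between u y v -> (u == y) || adjG u y -> ~~ anc y v ->
  advances v u [:: y; par y].
Proof.
move=> uyv uy yv; have y_nonroot : y != r by apply: contraNneq yv => ->; apply: anc_root.
apply: advances_two_moves uyv (between_par yv) _ uy (adjG_par y_nonroot).
by rewrite eq_sym par_neq.
Qed.

Section RoutingStep.
Variables (u v : V) (C : {set V}).
Hypotheses (uC : u \in C) (vC : v \notin C).
Hypothesis C_adj : forall x, x \in C -> (u == x) || adjG u x.

Lemma neq_C_v x : x \in C -> x != v.
Proof. by apply: contraTneq => ->. Qed.

Lemma advances_down : anc u v ->
  let x := deepest par [set x in C | anc x v] u in advances v u [:: x; childTo r par x v].
Proof.
move=> uv /=; set X := [set x in C | anc x v]; set x := deepest _ _ _.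
have uX : u \in X by rewrite inE uC.
have X0 : X != set0 by apply/set0Pn; exists u.
have [xX x_max] := deepest_spec u X0.
move: (xX); rewrite -/x inE => /andP[xC xv].
have ux : anc u x.
  have /orP[// | xu] := anc_total uv xv.
  case: (eqVneq x u) => [-> | neq_xu]; first exact: anc_refl.
  by have := x_max u uX; rewrite leqNgt (dep_lt xu neq_xu).
exact: advances_childTo (between_down ux xv) (C_adj xC) xv (neq_C_v xC).
Qed.

Lemma advances_up : anc v u ->
  let x := highest par [set x in C | anc v x && anc x u] u in advances v u [:: x; par x].
Proof.
move=> vu /=; set X := [set x in C | _]; set x := highest _ _ _.
have uX : u \in X by rewrite inE uC vu anc_refl.
move: (highest_in uX); rewrite -/x inE => /and3P[xC vx xu].
apply: advances_par (between_up vx xu) (C_adj xC) _.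
by apply: contra (neq_C_v xC) => xv; rewrite (anc_antisym xv vx).
Qed.

Lemma advances_up_across : ~~ anc u v ->
  let y := highest par [set y in C | anc y u && ~~ anc y v] u in advances v u [:: y; par y].
Proof.
move=> uv /=; set Y := [set y in C | _]; set y := highest _ _ _.
have uY : u \in Y by rewrite inE uC anc_refl uv.
move: (highest_in uY); rewrite -/y inE => /and3P[yC yu yv].
exact: advances_par (between_ancL yu yv) (C_adj yC) yv.
Qed.

Lemma advances_across_down : [set x in C | anc x v && ~~ anc x u] != set0 ->
  let x := deepest par [set x in C | anc x v && ~~ anc x u] u in
  advances v u [:: x; childTo r par x v].
Proof.
move=> X0 /=; set x := deepest _ _ _; have [xX _] := deepest_spec u X0.
move: xX; rewrite -/x inE => /and3P[xC xv xu].
exact: advances_childTo (between_ancR xv xu) (C_adj xC) xv (neq_C_v xC).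
Qed.

End RoutingStep.

Lemma rstep_advances u v : u != v -> advances v u (rstep r par c1 k u v).
Proof.
move=> neq_uv; have [_ uC] := Tu_spec u.
set C := CR (Tu r par c1 k u) in uC; rewrite /rstep -/C.
case: ifP => [uv_adj | /negbT uv_nadj].
  by rewrite /advances /= /route_edge between_last uv_adj orbT hops_xx hops_gt0.
have C_adj x : x \in C -> (u == x) || adjG u x.
  by move=> xC; case: (eqVneq u x) => //= neq_ux; apply: adjG_CR_Tu neq_ux uC xC.
have vC : v \notin C by apply: contra uv_nadj; apply: adjG_CR_Tu.
case: ifP => [uv | /negbT uv]; first exact: advances_down.
case: ifP => [vu | _]; first exact: advances_up.
by case: ifP => [_ | /negbT X0]; [apply: advances_up_across | apply: advances_across_down].
Qed.

Lemma route_spec f u v : hops u v < f ->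
  last u (route r par c1 k f u v) = v /\ path (route_edge v) u (route r par c1 k f u v).
Proof.
elim: f u => [// | f IH] u lt_f /=; case: eqVneq => [-> // | neq_uv].
have /andP[step_path step_hops] := rstep_advances neq_uv.
have [last_v rest_path] := IH _ (leq_trans step_hops lt_f).
by rewrite last_cat cat_path step_path last_v rest_path.
Qed.

End Canonical.

End RootedTree.

Theorem theorem2 (R : realDomainType) (V : finType) (r : V) (par : V -> V)
    (w : V -> R) (c1 : V -> option V) (k : nat) :
  is_rooted_tree r par ->
  (forall x, x != r -> 0 < w x)%R ->
  heavy_child_spec r par c1 ->
  4 <= k ->
  forall u v : V,
    exists N : nat,
      let p := route r par c1 k N u v in
      [/\ last u p = v,
          walkw par w u p = dT par w u v &
          path (fun a b => (a == b) || adjG r par c1 k a b) u p].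
Proof.
move=> tree _ _ _ u v; exists (hops par u v).+1 => /=.
have [last_v route_path] := route_spec tree c1 k (ltnSn (hops par u v)).
set p := route _ _ _ _ _ u v in last_v route_path *.
have between_path : path (fun a b => between par a b v) u p.
  by apply: sub_path route_path => a b /andP[].
split=> //; last by apply: sub_path route_path => a b /andP[].
by have := walkw_between w between_path; rewrite last_v dT_xx addr0.
Qed.
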